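(* Every regular locally almost arcwise connected topological space is locally connected.
   Context: Two sets $A,B$ are joined by an arc in a set $S$ if there is a continuous $\gamma:[0,1]\to X$ with $\gamma([0,1])\subseteq S$, $\gamma(0)\in A$, $\gamma(1)\in B$. $X$ is locally almost arcwise connected at $x$ if for every neighborhood $V$ of $x$ there is a neighborhood $U\subseteq V$ of $x$ such that each pair of nonempty open subsets of $U$ can be joined by an arc in $\overline V$; locally almost arcwise connected means this holds at every point. *)

From Stdlib Require Import Reals.
Open Scope R_scope.

Set Implicit Arguments.

Record topology (X : Type) := Topology {
  open : (X -> Prop) -> Prop;
  open_full : open (fun _ => True);
  open_inter : forall A B, open A -> open B -> open (fun x => A x /\ B x);
  open_union : forall F : (X -> Prop) -> Prop,
      (forall A, F A -> open A) -> open (fun x => exists A, F A /\ A x)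
}.

Section Topo.
Variables (X : Type) (T : topology X).

Definition closed (F : X -> Prop) : Prop := open T (fun x => ~ F x).

Definition nbhd (x : X) (N : X -> Prop) : Prop :=
  exists O, open T O /\ O x /\ (forall y, O y -> N y).

Definition closure (S : X -> Prop) : X -> Prop :=
  fun y => forall O, open T O -> O y -> exists z, O z /\ S z.

Definition subset (A B : X -> Prop) : Prop := forall x, A x -> B x.

(* Regular: points and closed sets not containing them are separated by
   disjoint open sets (no T1 assumption). *)
Definition regular : Prop :=
  forall (x : X) (F : X -> Prop), closed F -> ~ F x ->
    exists U V, open T U /\ open T V /\ U x /\ subset F V /\
      (forall y, U y -> V y -> False).

Definition connected (S : X -> Prop) : Prop :=
  forall A B, open T A -> open T B -> subset S (fun x => A x \/ B x) ->
    (exists x, S x /\ A x) -> (exists x, S x /\ B x) ->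
    exists x, S x /\ A x /\ B x.

Definition continuous_on_unit (g : R -> X) : Prop :=
  forall O, open T O -> forall t, 0 <= t <= 1 -> O (g t) ->
    exists eps, 0 < eps /\
      forall s, 0 <= s <= 1 -> Rabs (s - t) < eps -> O (g s).

Definition joined_by_arc_in (A B S : X -> Prop) : Prop :=
  exists g : R -> X, continuous_on_unit g /\
    (forall t, 0 <= t <= 1 -> S (g t)) /\ A (g 0) /\ B (g 1).

Definition loc_almost_arcwise_connected_at (x : X) : Prop :=
  forall V, nbhd x V -> exists U, nbhd x U /\ subset U V /\
    forall A B, open T A -> open T B -> subset A U -> subset B U ->
      (exists a, A a) -> (exists b, B b) ->
      joined_by_arc_in A B (closure V).

Definition loc_almost_arcwise_connected : Prop :=
  forall x, loc_almost_arcwise_connected_at x.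

Definition locally_connected : Prop :=
  forall x V, open T V -> V x ->
    exists U, open T U /\ U x /\ subset U V /\ connected U.

End Topo.

(* Around a point y of an open set V, regularity gives an open W with y in W
   and closure W inside V, and local almost arcwise connectedness gives an
   open O with y in O such that any two nonempty open parts of O are joined
   by an arc in closure W.  The union of O with all these arcs is connected
   and lies in V, so X is weakly locally connected; hence components of open
   sets are open and X is locally connected. *)
From Stdlib Require Import Reals Lra Classical FunctionalExtensionality PropExtensionality.
Open Scope R_scope.

Section LocallyConnected.
Variables (X : Type) (T : topology X).

Definition arc_of (A B S : X -> Prop) (g : R -> X) : Prop :=
  continuous_on_unit T g /\ (forall t, 0 <= t <= 1 -> S (g t)) /\ A (g 0) /\ B (g 1).

Definition arc_image (g : R -> X) : X -> Prop :=
  fun w => exists t, 0 <= t <= 1 /\ g t = w.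

Definition weakly_locally_connected : Prop :=
  forall y V, open T V -> V y ->
    exists O L, open T O /\ O y /\ subset O L /\ connected T L /\ subset L V.

Definition component_in (V : X -> Prop) (x : X) : X -> Prop :=
  fun z => exists C, connected T C /\ subset C V /\ C x /\ C z.

Lemma subset_closure (S : X -> Prop) : subset S (closure T S).
Proof. intros z Sz O _ Oz; exists z; auto. Qed.

Lemma open_of_local (S : X -> Prop) :
  (forall y, S y -> exists O, open T O /\ O y /\ subset O S) -> open T S.
Proof.
  intros Hloc.
  replace S with (fun x => exists A, (open T A /\ subset A S) /\ A x).
  - apply open_union; intros A [HA _]; exact HA.
  - apply functional_extensionality; intro x; apply propositional_extensionality; split.
    + intros [A [[_ HAS] Ax]]; auto.
    + intros Sx; destruct (Hloc x Sx) as [O [HO [Ox HOS]]]; eauto.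
Qed.

Lemma regular_closure_nbhd (V : X -> Prop) (y : X) :
  regular T -> open T V -> V y ->
  exists W, open T W /\ W y /\ subset (closure T W) V.
Proof.
  intros Hreg HV Vy.
  assert (Hcl : closed T (fun x => ~ V x)).
  { unfold closed; replace (fun x => ~ ~ V x) with V; [exact HV|].
    apply functional_extensionality; intro x; apply propositional_extensionality.
    split; [auto | apply NNPP]. }
  destruct (Hreg y _ Hcl ltac:(auto)) as [U [U' [HU [HU' [Uy [HsU' Hdisj]]]]]].
  exists U; repeat split; auto.
  intros z Hz; apply NNPP; intro nVz.
  destruct (Hz U' HU' (HsU' z nVz)) as [w [U'w Uw]]; eauto.
Qed.

Lemma connected_singleton (x : X) : connected T (fun w => w = x).
Proof. intros A B _ _ _ [a [-> Aa]] [b [-> Bb]]; exists x; auto. Qed.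

Lemma connected_bigcup (F : (X -> Prop) -> Prop) (p : X) :
  (forall C, F C -> connected T C /\ C p) ->
  connected T (fun z => exists C, F C /\ C z).
Proof.
  intros HF A B HA HB Hcov [a [[Ca [FCa Caa]] Aa]] [b [[Cb [FCb Cbb]] Bb]].
  assert (cross : forall C, F C -> (exists x, C x /\ A x) -> (exists x, C x /\ B x) ->
            exists x, (exists C, F C /\ C x) /\ A x /\ B x).
  { intros C FC CA CB; destruct (HF C FC) as [HC _].
    destruct (HC A B HA HB) as [x [Cx ABx]]; eauto.
    intros x Cx; apply Hcov; eauto. }
  destruct (HF Ca FCa) as [_ Cap]; destruct (HF Cb FCb) as [_ Cbp].
  destruct (Hcov p) as [Ap | Bp]; [exists Ca; auto | |].
  - apply (cross Cb); eauto.
  - apply (cross Ca); eauto.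
Qed.

Lemma connected_union2 (C1 C2 : X -> Prop) (p : X) :
  connected T C1 -> connected T C2 -> C1 p -> C2 p ->
  connected T (fun w => C1 w \/ C2 w).
Proof.
  intros H1 H2 P1 P2 A B HA HB Hcov EA EB.
  assert (Hu : connected T (fun z => exists C, (C = C1 \/ C = C2) /\ C z)).
  { apply connected_bigcup with p; intros C [-> | ->]; auto. }
  destruct (Hu A B HA HB) as [x [[C [[-> | ->] Cx]] ABx]].
  - intros x [C [[-> | ->] Cx]]; auto.
  - destruct EA as [a [[C1a | C2a] Aa]];
      [exists a; split; [exists C1|] | exists a; split; [exists C2|]]; auto.
  - destruct EB as [b [[C1b | C2b] Bb]];
      [exists b; split; [exists C1|] | exists b; split; [exists C2|]]; auto.
  - exists x; auto.
  - exists x; auto.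
Qed.

Lemma component_in_connected (V : X -> Prop) (x : X) :
  connected T (component_in V x).
Proof.
  intros A B HA HB Hcov EA EB.
  destruct (connected_bigcup (fun C => connected T C /\ subset C V /\ C x) x)
    with A B as [z [[C [[HC [HCV Cx]] Cz]] ABz]].
  - intros C [HC [_ Cx]]; auto.
  - exact HA.
  - exact HB.
  - intros z [C [[HC [HCV Cx]] Cz]]; apply Hcov; exists C; auto.
  - destruct EA as [a [[C [HC [HCV [Cx Ca]]]] Aa]]; exists a; split; eauto.
  - destruct EB as [b [[C [HC [HCV [Cx Cb]]]] Bb]]; exists b; split; eauto.
  - exists z; split; [exists C|]; auto.
Qed.

(* The first exit time c of g from A after a is the crossing point: g c lies
   in A (if A contains g on a neighbourhood of c, c is not the supremum) or in
   B, and in the latter case times slightly before c are in both. *)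
Lemma arc_crossing (g : R -> X) (A B : X -> Prop) (a b : R) :
  continuous_on_unit T g -> open T A -> open T B ->
  (forall t, 0 <= t <= 1 -> A (g t) \/ B (g t)) ->
  0 <= a -> a <= b -> b <= 1 -> A (g a) -> B (g b) ->
  exists t, 0 <= t <= 1 /\ A (g t) /\ B (g t).
Proof.
  intros Hg HA HB Hcov Ha0 Hab Hb1 Aa Bb.
  set (E := fun t => a <= t <= b /\ forall s, a <= s <= t -> A (g s)).
  assert (Ea : E a).
  { split; [lra|]; intros s Hs; replace s with a by lra; exact Aa. }
  destruct (completeness E) as [c [Hub Hlub]].
  { exists b; intros t [Ht _]; lra. }
  { exists a; exact Ea. }
  assert (Hac : a <= c) by (apply Hub, Ea).
  assert (Hcb : c <= b) by (apply Hlub; intros t [Ht _]; lra).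
  assert (A_before_c : forall s, a <= s < c -> A (g s)).
  { intros s Hs; apply NNPP; intro nAs.
    assert (c <= s); [|lra].
    apply Hlub; intros t [Ht HtA]; apply Rnot_lt_le; intro Hst; apply nAs, HtA; lra. }
  destruct (Hcov c ltac:(lra)) as [Ac | Bc].
  - destruct (Req_dec c b) as [-> | Hcb'].
    + exists b; repeat split; auto; lra.
    + exfalso.
      destruct (Hg A HA c ltac:(lra) Ac) as [eps [Heps HAc]].
      set (d := Rmin b (c + eps / 2)).
      assert (Hd : c < d <= b /\ d <= c + eps / 2).
      { unfold d, Rmin; destruct Rle_dec; lra. }
      assert (Ed : E d).
      { split; [lra|]; intros s Hs; destruct (Rlt_dec s c).
        - apply A_before_c; lra.
        - apply HAc; [lra | apply Rabs_def1; lra]. }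
      specialize (Hub d Ed); lra.
  - destruct (classic (A (g c))) as [Ac | nAc].
    + exists c; repeat split; auto; lra.
    + assert (a < c) by (destruct (Req_dec a c) as [<- |]; [contradiction | lra]).
      destruct (Hg B HB c ltac:(lra) Bc) as [eps [Heps HBc]].
      set (s := Rmax a (c - eps / 2)).
      assert (Hs : a <= s < c /\ c - eps / 2 <= s).
      { unfold s, Rmax; destruct Rle_dec; lra. }
      exists s; repeat split; try lra.
      * apply A_before_c; lra.
      * apply HBc; [lra | apply Rabs_def1; lra].
Qed.

Lemma connected_arc_image (g : R -> X) :
  continuous_on_unit T g -> connected T (arc_image g).
Proof.
  intros Hg A B HA HB Hcov [_ [[s [Hs <-]] As]] [_ [[s' [Hs' <-]] Bs']].
  assert (Hcov' : forall t, 0 <= t <= 1 -> A (g t) \/ B (g t)).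
  { intros t Ht; apply Hcov; exists t; auto. }
  assert (Himg : forall t, 0 <= t <= 1 -> A (g t) -> B (g t) ->
            exists x, arc_image g x /\ A x /\ B x).
  { intros t Ht At Bt; exists (g t); split; [exists t|]; auto. }
  destruct (Rle_dec s s').
  - destruct (arc_crossing g A B s s') as [t [Ht [At Bt]]]; auto; try lra.
    apply (Himg t); auto.
  - destruct (arc_crossing g B A s' s) as [t [Ht [Bt At]]]; auto; try lra.
    + intros t Ht; destruct (Hcov' t Ht); auto.
    + apply (Himg t); auto.
Qed.

Lemma connected_of_links (L O : X -> Prop) :
  (forall z, L z -> exists C, connected T C /\ subset C L /\ C z /\ exists w, C w /\ O w) ->
  (forall A B, open T A -> open T B -> (exists a, O a /\ A a) -> (exists b, O b /\ B b) ->
     exists C, connected T C /\ subset C L /\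
       (exists a, C a /\ A a) /\ (exists b, C b /\ B b)) ->
  connected T L.
Proof.
  intros Hpts Hlink A B HA HB Hcov [a [La Aa]] [b [Lb Bb]].
  assert (cross : forall C, connected T C -> subset C L ->
            (exists x, C x /\ A x) -> (exists x, C x /\ B x) ->
            exists x, L x /\ A x /\ B x).
  { intros C HC HCL CA CB.
    destruct (HC A B HA HB) as [x [Cx ABx]]; auto.
    - intros x Cx; apply Hcov, HCL, Cx.
    - exists x; auto. }
  destruct (Hpts a La) as [Ca [HCa [HCaL [Caa [wa [Cwa Owa]]]]]].
  destruct (Hpts b Lb) as [Cb [HCb [HCbL [Cbb [wb [Cwb Owb]]]]]].
  destruct (Hcov wa (HCaL wa Cwa)) as [Awa | Bwa]; [|apply (cross Ca); eauto].
  destruct (Hcov wb (HCbL wb Cwb)) as [Awb | Bwb]; [apply (cross Cb); eauto|].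
  destruct (Hlink A B HA HB) as [C [HC [HCL [CA CB]]]].
  - exists wa; auto.
  - exists wb; auto.
  - apply (cross C); auto.
Qed.

Lemma weakly_locally_connected_of_laac :
  regular T -> loc_almost_arcwise_connected T -> weakly_locally_connected.
Proof.
  intros Hreg Hlaac y V HV Vy.
  destruct (regular_closure_nbhd V y Hreg HV Vy) as [W [HW [Wy HclWV]]].
  destruct (Hlaac y W) as [U [[O [HO [Oy HOU]]] [HUW Harc]]].
  { exists W; repeat split; auto. }
  set (L := fun w => O w \/ exists g, arc_of O O (closure T W) g /\ arc_image g w).
  assert (arc_in_L : forall g, arc_of O O (closure T W) g -> subset (arc_image g) L).
  { intros g Hg w Hw; right; exists g; auto. }
  exists O, L; repeat split; auto.
  - intros w Ow; left; exact Ow.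
  - apply (connected_of_links L O).
    + intros z [Oz | [g [Hg Hz]]].
      * exists (fun w => w = z); repeat split.
        -- apply connected_singleton.
        -- intros w ->; left; exact Oz.
        -- exists z; auto.
      * pose proof Hg as [Hgc [_ [O0 _]]].
        exists (arc_image g); split; [|split; [|split]].
        -- apply connected_arc_image, Hgc.
        -- apply arc_in_L, Hg.
        -- exact Hz.
        -- exists (g 0); split; [exists 0; split; [lra | reflexivity] | exact O0].
    + intros A B HA HB [a [Oa Aa]] [b [Ob Bb]].
      assert (Hjoin : joined_by_arc_in T (fun w => O w /\ A w) (fun w => O w /\ B w)
                        (closure T W)).
      { apply Harc.
        - apply open_inter; auto.
        - apply open_inter; auto.
        - intros w [Ow _]; apply HOU, Ow.
        - intros w [Ow _]; apply HOU, Ow.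
        - exists a; auto.
        - exists b; auto. }
      destruct Hjoin as [g [Hgc [HgW [[O0 A0] [O1 B1]]]]].
      exists (arc_image g); repeat split.
      * apply connected_arc_image, Hgc.
      * apply arc_in_L; repeat split; auto.
      * exists (g 0); split; [exists 0; split; [lra | reflexivity] | exact A0].
      * exists (g 1); split; [exists 1; split; [lra | reflexivity] | exact B1].
  - intros w [Ow | [g [[_ [HgW _]] [t [Ht <-]]]]]; apply HclWV.
    + apply subset_closure, HUW, HOU, Ow.
    + apply HgW, Ht.
Qed.

Lemma locally_connected_of_weakly :
  weakly_locally_connected -> locally_connected T.
Proof.
  intros Hwlc x V HV Vx.
  exists (component_in V x); repeat split.
  - apply open_of_local; intros y [C [HC [HCV [Cx Cy]]]].
    destruct (Hwlc y V HV (HCV y Cy)) as [O [L [HO [Oy [HOL [HL HLV]]]]]].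
    exists O; repeat split; auto.
    intros z Oz; exists (fun w => C w \/ L w); repeat split; auto.
    + apply (connected_union2 C L y); auto.
    + intros w [Cw | Lw]; auto.
  - exists (fun w => w = x); repeat split.
    + apply connected_singleton.
    + intros w ->; exact Vx.
  - intros z [C [_ [HCV [_ Cz]]]]; auto.
  - apply component_in_connected.
Qed.

End LocallyConnected.

Theorem mainTheorem12 (X : Type) (T : topology X) :
  regular T -> loc_almost_arcwise_connected T -> locally_connected T.
Proof.
  intros Hreg Hlaac.
  apply locally_connected_of_weakly, weakly_locally_connected_of_laac; assumption.
Qed.
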